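(* Let $\{\varphi_n\},\{\psi_n\}$ be biorthogonal sequences in a Hilbert space $\mathcal H$ forming a $(\mathcal D,\mathcal E)$-quasi basis for dense subspaces $\mathcal D,\mathcal E$ with $D_\psi\subseteq\mathcal D\subseteq D(\varphi)$, $D_\varphi\subseteq\mathcal E\subseteq D(\psi)$. Suppose there is a real sequence $\{r_n\}$ with $r_n\ge1$ for all $n$ such that $D(\varphi_r):=\{x\in\mathcal H:\sum_k r_k^2|\langle x,\varphi_k\rangle|^2<\infty\}$ satisfies $D(\varphi_r)\subseteq\mathcal D$ and $D(\varphi_r)$ is dense in $\mathcal H$. Then $D_\varphi$ is dense in $\mathcal H$ and $(\{\varphi_n\},\{\psi_n\})$ is a $(D(\varphi),D_\varphi)$-quasi basis.
   Context: Inner product linear in the first argument. Biorthogonal: $\langle\varphi_n,\psi_m\rangle=\delta_{nm}$. $D_\varphi,D_\psi$ are the linear spans; $D(\varphi)=\{x:\sum_n|\langle x,\varphi_n\rangle|^2<\infty\}$, similarly $D(\psi)$. The pair is a $(\mathcal D,\mathcal E)$-quasi basis if $\sum_k\langle x,\varphi_k\rangle\langle\psi_k,y\rangle=\langle x,y\rangle$ for all $x\in\mathcal D$, $y\in\mathcal E$. *)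

From mathcomp Require Import all_boot all_order all_algebra.
From mathcomp Require Import reals.
Import Order.TTheory GRing.Theory Num.Theory.
From mathcomp Require Export complex.

Set Implicit Arguments.
Unset Strict Implicit.
Unset Printing Implicit Defensive.

Local Open Scope ring_scope.
Local Open Scope complex_scope.

Section Hilbert.
Variable R : realType.
Variable V : lmodType R[i].
Variable ip : V -> V -> R[i].   (* inner product, linear in the first argument *)

Definition is_inner_product : Prop :=
  [/\ (forall (a : R[i]) (x y z : V), ip (a *: x + y) z = a * ip x z + ip y z),
      (forall x y : V, ip y x = (ip x y)^*),
      (forall x : V, exists t : R, 0 <= t /\ ip x x = t%:C)
    & (forall x : V, ip x x = 0 -> x = 0)].

Definition hnorm (x : V) : R := Num.sqrt (Normc.normc (ip x x)).

Definition hcomplete : Prop :=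
  forall u : nat -> V,
    (forall eps : R, 0 < eps -> exists N : nat,
        forall m n : nat, (N <= m)%N -> (N <= n)%N -> hnorm (u m - u n) < eps) ->
    exists l : V, forall eps : R, 0 < eps -> exists N : nat,
        forall n : nat, (N <= n)%N -> hnorm (u n - l) < eps.

Definition hilbert_space : Prop := is_inner_product /\ hcomplete.

Definition subspace (S : V -> Prop) : Prop :=
  S 0 /\ forall (a : R[i]) (x y : V), S x -> S y -> S (a *: x + y).

Definition dense (S : V -> Prop) : Prop :=
  forall (x : V) (eps : R), 0 < eps -> exists y : V, S y /\ hnorm (x - y) < eps.

Definition span_seq (f : nat -> V) : V -> Prop :=
  fun x => exists (n : nat) (c : nat -> R[i]), x = \sum_(k < n) c k *: f k.

(* D(f) = { x : sum_k |<x, f_k>|^2 < oo } (nonnegative series with bounded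
   partial sums) *)
Definition Dom (f : nat -> V) : V -> Prop :=
  fun x => exists M : R, forall n : nat,
      \sum_(k < n) Normc.normc (ip x (f k)) ^+ 2 <= M.

Definition Dom_r (r : nat -> R) (f : nat -> V) : V -> Prop :=
  fun x => exists M : R, forall n : nat,
      \sum_(k < n) (r k) ^+ 2 * Normc.normc (ip x (f k)) ^+ 2 <= M.

Definition biorthogonal (phi psi : nat -> V) : Prop :=
  forall n m : nat, ip (phi n) (psi m) = (n == m)%:R.

Definition series_to (a : nat -> R[i]) (l : R[i]) : Prop :=
  forall eps : R, 0 < eps -> exists N : nat,
    forall n : nat, (N <= n)%N -> Normc.normc (\sum_(k < n) a k - l) < eps.

Definition quasi_basis (phi psi : nat -> V) (D E : V -> Prop) : Prop :=
  forall x y : V, D x -> E y ->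
    series_to (fun k => ip x (phi k) * ip (psi k) y) (ip x y).

End Hilbert.

(* A vector z orthogonal to every phi_n lies trivially in D(phi_r), hence in D,
   so every term of the quasi-basis expansion of <z, y> vanishes and <z, y> = 0
   for all y in E; as E is dense, z = 0.  In a Hilbert space a sequence with
   trivial orthogonal complement has dense span: by Bessel's inequality the
   projections of v onto the Gram-Schmidt orthogonalization of phi form a
   Cauchy sequence, and its limit l satisfies v - l _|_ phi_n, so l = v.
   Finally, for y in D_phi biorthogonality kills <psi_k, y> beyond the length
   of the expansion of y, so the quasi-basis series is a finite sum equal to
   <x, y> for every x. *)

From mathcomp Require Import all_boot all_order all_algebra.
From mathcomp Require Import reals complex.
From mathcomp Require Import ring lra.
Import Order.TTheory GRing.Theory Num.Theory.
Local Open Scope ring_scope.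
Set Implicit Arguments.
Unset Strict Implicit.

Lemma le_eps_mul_eq0 (R : realFieldType) (a c : R) :
  0 <= a -> (forall e, 0 < e -> a <= e * c) -> a = 0.
Proof.
move=> a_ge0 a_le; have c_ge0 : 0 <= c by rewrite -[c]mul1r (le_trans a_ge0) ?a_le.
apply/eqP; rewrite eq_le a_ge0 andbT; apply/ler_addgt0Pr => e e_gt0.
have c1_gt0 : 0 < c + 1 by lra.
apply: (le_trans (a_le _ (divr_gt0 e_gt0 c1_gt0))).
by rewrite add0r mulrAC ler_pdivrMr //; nra.
Qed.

Lemma bounded_nondecreasing_cauchy (R : realType) (s : nat -> R) (M : R) :
  {homo s : n m / (n <= m)%N >-> n <= m} -> (forall n, s n <= M) ->
  forall e, 0 < e -> exists N, forall n m, (N <= n <= m)%N -> s m - s n < e.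
Proof.
move=> s_homo s_le e e_gt0.
have s_sup : classical_sets.has_sup (fun y => exists n, y = s n).
  by split; [exists (s 0%N), 0%N | exists M => _ [n ->]].
have [_ [N ->] sN_gt] := sup_adherent e_gt0 s_sup.
exists N => n m /andP[Nn nm].
have sm_le : s m <= reals.sup (fun y => exists n, y = s n).
  by apply: (sup_upper_bound s_sup); exists m.
have := s_homo _ _ Nn; lra.
Qed.

Lemma sum_ord_single (V : nmodType) (F : nat -> V) j n : (j < n)%N ->
  (forall k, (k < n)%N -> k != j -> F k = 0) -> \sum_(k < n) F k = F j.
Proof.
move=> jn F0; rewrite (bigD1 (Ordinal jn)) //= big1 ?addr0 // => k kj.
by apply: F0 => //; apply: contra kj => /eqP kj; apply/eqP/val_inj.
Qed.

Section ComplexFacts.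
Local Open Scope complex_scope.
Variable R : rcfType.

Lemma normc_ge0 (a : R[i]) : 0 <= Normc.normc a.
Proof. by case: a => p q; exact: sqrtr_ge0. Qed.

Lemma normc_real (t : R) : 0 <= t -> Normc.normc t%:C = t.
Proof. by move=> t0 /=; rewrite expr0n addr0 sqrtr_sqr ger0_norm. Qed.

Lemma mulcJ_normc (a : R[i]) : a * a^* = (Normc.normc a ^+ 2)%:C.
Proof.
case: a => p q /=; rewrite sqr_sqrtr ?addr_ge0 ?sqr_ge0 //.
by apply/eqP; rewrite eq_complex /=; apply/andP; split; apply/eqP; ring.
Qed.

End ComplexFacts.

Section InnerProduct.
Local Open Scope complex_scope.
Variables (R : realType) (V : lmodType R[i]) (ip : V -> V -> R[i]).
Hypothesis ip_inner : is_inner_product ip.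

Lemma ipDl x y z : ip (x + y) z = ip x z + ip y z.
Proof. by case: ip_inner => linl _ _ _; rewrite -[x]scale1r linl mul1r scale1r. Qed.

Lemma ip0l z : ip 0 z = 0.
Proof. by apply: (addrI (ip 0 z)); rewrite -ipDl !addr0. Qed.

Lemma ipZl a x z : ip (a *: x) z = a * ip x z.
Proof. by case: ip_inner => linl _ _ _; rewrite -[a *: x]addr0 linl ip0l addr0. Qed.

Lemma ipNl x z : ip (- x) z = - ip x z.
Proof. by rewrite -scaleN1r ipZl mulN1r. Qed.

Lemma ipBl x y z : ip (x - y) z = ip x z - ip y z.
Proof. by rewrite ipDl ipNl. Qed.

Lemma ip_swap x y : ip y x = (ip x y)^*.
Proof. by case: ip_inner. Qed.

Lemma ipDr x y z : ip z (x + y) = ip z x + ip z y.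
Proof. by rewrite ip_swap ipDl rmorphD /= -!ip_swap. Qed.

Lemma ipZr a x z : ip z (a *: x) = a^* * ip z x.
Proof. by rewrite ip_swap ipZl rmorphM /= -ip_swap. Qed.

Lemma ip0r z : ip z 0 = 0.
Proof. by rewrite ip_swap ip0l conjc0. Qed.

Lemma ipBr x y z : ip z (x - y) = ip z x - ip z y.
Proof. by rewrite ip_swap ipBl rmorphB /= -!ip_swap. Qed.

Lemma ip_suml I (r : seq I) (P : pred I) (F : I -> V) z :
  ip (\sum_(i <- r | P i) F i) z = \sum_(i <- r | P i) ip (F i) z.
Proof. exact: (big_morph (ip^~ z) (fun x y => ipDl x y z) (ip0l z)). Qed.

Lemma ip_sumr I (r : seq I) (P : pred I) (F : I -> V) z :
  ip z (\sum_(i <- r | P i) F i) = \sum_(i <- r | P i) ip z (F i).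
Proof. exact: (big_morph (ip z) (fun x y => ipDr x y z) (ip0r z)). Qed.

Definition sqnorm x : R := complex.Re (ip x x).

Lemma sqnormE x : ip x x = (sqnorm x)%:C.
Proof. by case: ip_inner => _ _ pos _; rewrite /sqnorm; have [t [_ ->]] := pos x. Qed.

Lemma sqnorm_ge0 x : 0 <= sqnorm x.
Proof.
by case: ip_inner => _ _ pos _; have [t [t_ge0 xx]] := pos x; rewrite /sqnorm xx.
Qed.

Lemma sqnorm_eq0 x : sqnorm x = 0 -> x = 0.
Proof. by case: ip_inner => _ _ _ definite x0; apply: definite; rewrite sqnormE x0. Qed.

Lemma sqnormD_orth x y : ip x y = 0 -> sqnorm (x + y) = sqnorm x + sqnorm y.
Proof.
move=> xy0; have yx0 : ip y x = 0 by rewrite ip_swap xy0 conjc0.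
by rewrite /sqnorm ipDl !ipDr xy0 yx0 addr0 add0r raddfD.
Qed.

Lemma hnormE x : hnorm ip x = Num.sqrt (sqnorm x).
Proof. by rewrite /hnorm sqnormE normc_real ?sqnorm_ge0. Qed.

Lemma hnorm_ge0 x : 0 <= hnorm ip x.
Proof. exact: sqrtr_ge0. Qed.

Lemma hnormN x : hnorm ip (- x) = hnorm ip x.
Proof. by rewrite /hnorm ipNl ip_swap ipNl rmorphN /= -ip_swap opprK. Qed.

Lemma hnorm_ltE x e : 0 < e -> (hnorm ip x < e) = (sqnorm x < e ^+ 2).
Proof.
move=> e_gt0; rewrite hnormE -{1}(ger0_norm (ltW e_gt0)) -sqrtr_sqr.
by rewrite ltr_sqrt ?exprn_gt0.
Qed.

Lemma sqnormZ a x : sqnorm (a *: x) = Normc.normc a ^+ 2 * sqnorm x.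
Proof. by rewrite /sqnorm ipZl ipZr mulrA mulcJ_normc sqnormE -rmorphM. Qed.

Lemma normc_ip_sqr_le x y : Normc.normc (ip x y) ^+ 2 <= sqnorm x * sqnorm y.
Proof.
have [y0|y_neq0] := eqVneq (sqnorm y) 0.
  by rewrite (sqnorm_eq0 y0) ip0r Normc.normc0 expr0n /sqnorm ip0l mulr0.
have y_gt0 : 0 < sqnorm y by rewrite lt_def y_neq0 sqnorm_ge0.
have yC_neq0 : (sqnorm y)%:C != 0 by rewrite (inj_eq (@complexI _)).
pose t := ip x y / (sqnorm y)%:C.
have orth_proj : ip (x - t *: y) (t *: y) = 0.
  by rewrite ipZr ipBl ipZl sqnormE divfK // subrr mulr0.
have proj_le : sqnorm (t *: y) <= sqnorm x.
  by have := sqnormD_orth orth_proj; rewrite subrK => ->; rewrite lerDr sqnorm_ge0.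
rewrite sqnormZ Normc.normcM Normc.normcV normc_real ?sqnorm_ge0 // in proj_le.
have -> : Normc.normc (ip x y) ^+ 2 =
    (Normc.normc (ip x y) / sqnorm y) ^+ 2 * sqnorm y * sqnorm y by field.
by rewrite ler_pM2r.
Qed.

Lemma normc_ip_le x y : Normc.normc (ip x y) <= hnorm ip x * hnorm ip y.
Proof.
rewrite !hnormE -sqrtrM ?sqnorm_ge0 // -[Normc.normc _]ger0_norm ?normc_ge0 //.
by rewrite -sqrtr_sqr ler_sqrt ?normc_ip_sqr_le ?mulr_ge0 ?sqnorm_ge0.
Qed.

End InnerProduct.

Section Span.
Variables (R : realType) (V : lmodType R[i]) (f : nat -> V).

Lemma span_seq0 : span_seq f 0.
Proof. by exists 0%N, (fun=> 0); rewrite big_ord0. Qed.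

Lemma span_seq_mem j : span_seq f (f j).
Proof.
exists j.+1, (fun k => (k == j)%:R); rewrite big_ord_recr /= eqxx scale1r.
by rewrite big1 ?add0r // => k _; rewrite ltn_eqF // scale0r.
Qed.

Lemma lincomb_widen n m (c : nat -> R[i]) : (n <= m)%N ->
  \sum_(k < n) c k *: f k = \sum_(k < m) (if (k < n)%N then c k else 0) *: f k.
Proof.
move=> nm; rewrite (big_ord_widen _ (fun k => c k *: f k) nm) big_mkcond.
by apply: eq_bigr => k _; case: ifP; rewrite ?scale0r.
Qed.

Lemma span_seq_subspace : subspace (span_seq f).
Proof.
split; first exact: span_seq0.
move=> a _ _ [n1 [c1 ->]] [n2 [c2 ->]].
exists (maxn n1 n2), (fun k => a * (if (k < n1)%N then c1 k else 0) +
   (if (k < n2)%N then c2 k else 0)).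
rewrite (lincomb_widen c1 (leq_maxl n1 n2)).
rewrite (lincomb_widen c2 (leq_maxr n1 n2)) scaler_sumr -big_split /=.
by apply: eq_bigr => k _; rewrite scalerDl scalerA.
Qed.

Lemma span_seqD x y : span_seq f x -> span_seq f y -> span_seq f (x + y).
Proof. by rewrite -{2}[x]scale1r; case: span_seq_subspace => _; apply. Qed.

Lemma span_seqZ a x : span_seq f x -> span_seq f (a *: x).
Proof.
by rewrite -[_ *: _]addr0 => fx; case: span_seq_subspace => f0; apply.
Qed.

Lemma span_seq_sum I (r : seq I) (P : pred I) (F : I -> V) :
  (forall i, P i -> span_seq f (F i)) -> span_seq f (\sum_(i <- r | P i) F i).
Proof. by move=> FP; apply: big_ind => //; [exact: span_seq0 | exact: span_seqD]. Qed.

End Span.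

Section GramSchmidt.
Variables (R : realType) (V : lmodType R[i]) (ip : V -> V -> R[i]).
Hypothesis ip_inner : is_inner_product ip.
Variable phi : nat -> V.

(* As [a / 0 = 0], a null vector [z] contributes nothing to a projection, so the
   orthogonalization below needs no linear independence of [phi]. *)
Definition proj_coef (w z : V) : R[i] := ip w z / ip z z.

Lemma proj_coef_mul w z : proj_coef w z * ip z z = ip w z.
Proof.
have [z0|z_neq0] := eqVneq (sqnorm ip z) 0.
  by rewrite (sqnorm_eq0 ip_inner z0) !(ip0r ip_inner) mulr0.
by rewrite /proj_coef divfK // (sqnormE ip_inner) (inj_eq (@complexI _)).
Qed.

Fixpoint gs_upto (n : nat) : nat -> V :=
  if n is n'.+1 then fun k => if (k < n')%N then gs_upto n' k
    else phi n' - \sum_(j < n') proj_coef (phi n') (gs_upto n' j) *: gs_upto n' j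
  else fun=> 0.

Definition gs n := gs_upto n.+1 n.

Lemma gs_uptoE n k : (k < n)%N -> gs_upto n k = gs k.
Proof.
elim: n => [//|n IHn] /=; rewrite ltnS leq_eqVlt => /orP[/eqP-> | kn].
  by rewrite /gs /= ltnn.
by rewrite kn IHn.
Qed.

Lemma gsE n : gs n = phi n - \sum_(j < n) proj_coef (phi n) (gs j) *: gs j.
Proof.
rewrite {1}/gs /= ltnn; congr (_ - _); apply: eq_bigr => j _.
by rewrite gs_uptoE.
Qed.

Lemma ip_gs_lt n j : (j < n)%N -> ip (gs n) (gs j) = 0.
Proof.
elim/ltn_ind: n j => n IHn j jn.
rewrite gsE (ipBl ip_inner) (ip_suml ip_inner).
under eq_bigr do rewrite (ipZl ip_inner).
rewrite (sum_ord_single (F := fun k => proj_coef (phi n) (gs k) * ip (gs k) (gs j)) jn).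
  by rewrite proj_coef_mul subrr.
move=> k kn kj.
have [kj'|jk|/eqP] := ltngtP k j; last by rewrite (negbTE kj).
  by rewrite (ip_swap ip_inner) IHn // conjc0 mulr0.
by rewrite IHn // mulr0.
Qed.

Lemma ip_gs_neq k j : k != j -> ip (gs k) (gs j) = 0.
Proof.
have [kj|jk|->] := ltngtP k j; rewrite ?eqxx // => _; last exact: ip_gs_lt.
by rewrite (ip_swap ip_inner) ip_gs_lt // conjc0.
Qed.

Definition gs_proj v m := \sum_(k < m) proj_coef v (gs k) *: gs k.

Lemma ip_gs_proj_gs v m j : (j < m)%N -> ip (gs_proj v m) (gs j) = ip v (gs j).
Proof.
move=> jm; rewrite (ip_suml ip_inner).
under eq_bigr do rewrite (ipZl ip_inner).
rewrite (sum_ord_single (F := fun k => proj_coef v (gs k) * ip (gs k) (gs j)) jm).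
  exact: proj_coef_mul.
by move=> k _ kj; rewrite ip_gs_neq // mulr0.
Qed.

Lemma ip_gs_proj_orth x v m :
  (forall k, (k < m)%N -> ip x (gs k) = 0) -> ip x (gs_proj v m) = 0.
Proof.
move=> x_orth; rewrite (ip_sumr ip_inner) big1 // => k _.
by rewrite (ipZr ip_inner) x_orth // mulr0.
Qed.

Lemma sqnorm_gs_proj_le v m : sqnorm ip (gs_proj v m) <= sqnorm ip v.
Proof.
have residual_orth : ip (v - gs_proj v m) (gs_proj v m) = 0.
  by apply: ip_gs_proj_orth => k km; rewrite (ipBl ip_inner) ip_gs_proj_gs ?subrr.
have := sqnormD_orth ip_inner residual_orth; rewrite subrK => ->.
by rewrite lerDr (sqnorm_ge0 ip_inner).
Qed.

Lemma sqnorm_gs_projB v n m : (n <= m)%N ->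
  sqnorm ip (gs_proj v m - gs_proj v n) =
  sqnorm ip (gs_proj v m) - sqnorm ip (gs_proj v n).
Proof.
move=> nm; apply/eqP; rewrite eq_sym subr_eq.
rewrite -{1}[gs_proj v m](subrK (gs_proj v n)) (sqnormD_orth ip_inner) //.
apply: ip_gs_proj_orth => k kn; rewrite (ipBl ip_inner).
by rewrite !ip_gs_proj_gs ?subrr // (leq_trans kn nm).
Qed.

Lemma gs_span n : span_seq phi (gs n).
Proof.
elim/ltn_ind: n => n IHn; rewrite gsE -scaleN1r.
apply: span_seqD; first exact: span_seq_mem.
by apply: span_seqZ; apply: span_seq_sum => k _; apply/span_seqZ/IHn.
Qed.

Lemma orth_gs_orth z : (forall j, ip z (gs j) = 0) -> forall n, ip z (phi n) = 0.
Proof.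
move=> z_orth n.
rewrite -[phi n](subrK (\sum_(j < n) proj_coef (phi n) (gs j) *: gs j)) -gsE.
rewrite (ipDr ip_inner) z_orth add0r (ip_sumr ip_inner) big1 // => k _.
by rewrite (ipZr ip_inner) z_orth mulr0.
Qed.

End GramSchmidt.

Section TotalSequence.
Variables (R : realType) (V : lmodType R[i]) (ip : V -> V -> R[i]).
Hypotheses (ip_inner : is_inner_product ip) (ip_complete : hcomplete ip).
Variable phi : nat -> V.

Lemma gs_proj_cauchy v e : 0 < e ->
  exists N, forall m n, (N <= m)%N -> (N <= n)%N ->
  hnorm ip (gs_proj ip phi v m - gs_proj ip phi v n) < e.
Proof.
move=> e_gt0; pose s m := sqnorm ip (gs_proj ip phi v m).
have s_homo : {homo s : n m / (n <= m)%N >-> n <= m}.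
  by move=> n m nm; rewrite -subr_ge0 -sqnorm_gs_projB // sqnorm_ge0.
have [N sN] := bounded_nondecreasing_cauchy s_homo
  (sqnorm_gs_proj_le ip_inner phi v) (exprn_gt0 2 e_gt0).
exists N => m n; wlog nm : m n / (n <= m)%N => [wlog_nm Nm Nn|Nm Nn].
  have [nm|/ltnW mn] := leqP n m; first exact: wlog_nm.
  by rewrite -opprB (hnormN ip_inner); apply: wlog_nm.
by rewrite hnorm_ltE // sqnorm_gs_projB // sN // Nn.
Qed.

Lemma gs_proj_lim_orth v l :
  (forall e, 0 < e -> exists N, forall n, (N <= n)%N ->
     hnorm ip (gs_proj ip phi v n - l) < e) ->
  forall j, ip (v - l) (gs ip phi j) = 0.
Proof.
move=> proj_lim j; apply: Normc.eq0_normc.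
apply: (le_eps_mul_eq0 (c := hnorm ip (gs ip phi j))) (normc_ge0 _) _ => e e_gt0.
have [N projN] := proj_lim e e_gt0; pose n := maxn N j.+1.
have -> : v - l = (v - gs_proj ip phi v n) + (gs_proj ip phi v n - l).
  by rewrite addrA subrK.
rewrite (ipDl ip_inner) (ipBl ip_inner) ip_gs_proj_gs ?leq_maxr // subrr add0r.
apply: le_trans (normc_ip_le ip_inner _ _) _.
by rewrite ler_wpM2r ?hnorm_ge0 // ltW // projN // leq_maxl.
Qed.

Lemma total_span_dense :
  (forall z, (forall n, ip z (phi n) = 0) -> z = 0) -> dense ip (span_seq phi).
Proof.
move=> phi_total v e e_gt0.
have [l proj_lim] := ip_complete (gs_proj_cauchy v).
have vl : v = l by apply/subr0_eq/phi_total/(orth_gs_orth ip_inner)/gs_proj_lim_orth.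
have [N projN] := proj_lim e e_gt0; exists (gs_proj ip phi v N); split.
  by apply: span_seq_sum => k _; apply/span_seqZ/gs_span.
by rewrite -(hnormN ip_inner) opprB {2}vl projN.
Qed.

End TotalSequence.

Section QuasiBasis.
Local Open Scope complex_scope.
Variables (R : realType) (V : lmodType R[i]) (ip : V -> V -> R[i]).

Lemma Dom_r_orth (r : nat -> R) (f : nat -> V) x :
  (forall k, ip x (f k) = 0) -> Dom_r ip r f x.
Proof.
move=> x_orth; exists 0 => n; rewrite big1 // => k _.
by rewrite x_orth Normc.normc0 expr0n /= mulr0.
Qed.

Lemma series_to_eq0 (a : nat -> R[i]) l : (forall k, a k = 0) -> series_to a l -> l = 0.
Proof.
move=> a0 a_l; apply: Normc.eq0_normc.
apply: (le_eps_mul_eq0 (c := 1)) (normc_ge0 _) _ => e e_gt0.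
have [N aN] := a_l e e_gt0; have := aN N (leqnn N).
by rewrite big1 // sub0r normcN mulr1 => /ltW.
Qed.

Lemma quasi_basis_orth (phi psi : nat -> V) (D E : V -> Prop) z y :
  quasi_basis ip phi psi D E -> D z -> (forall k, ip z (phi k) = 0) -> E y ->
  ip z y = 0.
Proof.
by move=> qb Dz z_orth Ey; apply: series_to_eq0 (qb z y Dz Ey) => k; rewrite z_orth mul0r.
Qed.

Hypothesis ip_inner : is_inner_product ip.

Lemma orth_dense_eq0 (S : V -> Prop) z :
  dense ip S -> (forall y, S y -> ip z y = 0) -> z = 0.
Proof.
move=> S_dense z_orth; apply: (sqnorm_eq0 ip_inner).
apply: (le_eps_mul_eq0 (c := hnorm ip z)) (sqnorm_ge0 ip_inner z) _ => e e_gt0.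
have [y [Sy zy]] := S_dense z e e_gt0.
have -> : sqnorm ip z = Normc.normc (ip z (z - y)).
  rewrite (ipBr ip_inner) (z_orth y Sy) subr0 (sqnormE ip_inner).
  by rewrite normc_real ?sqnorm_ge0.
rewrite mulrC; apply: le_trans (normc_ip_le ip_inner _ _) _.
by rewrite ler_wpM2l ?hnorm_ge0 // ltW.
Qed.

Variables phi psi : nat -> V.
Hypothesis phi_psi_bio : biorthogonal ip phi psi.

Lemma ip_biorthogonal_lincomb k n (c : nat -> R[i]) :
  ip (psi k) (\sum_(j < n) c j *: phi j) = if (k < n)%N then (c k)^* else 0.
Proof.
rewrite (ip_sumr ip_inner).
under eq_bigr do rewrite (ipZr ip_inner) (ip_swap ip_inner (phi _)) phi_psi_bio conjc_nat.
case: ifP => kn.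
  rewrite (sum_ord_single (F := fun j => (c j)^* * (j == k)%:R) kn) ?eqxx ?mulr1 //.
  by move=> j _ jk; rewrite (negbTE jk) mulr0.
rewrite big1 // => j _; rewrite ltn_eqF ?mulr0 //.
by rewrite (leq_trans (ltn_ord j)) // leqNgt kn.
Qed.

Lemma biorthogonal_quasi_basis_span (D : V -> Prop) :
  quasi_basis ip phi psi D (span_seq phi).
Proof.
move=> x _ _ [n [c ->]] e e_gt0; exists n => m nm.
have -> : \sum_(k < m) ip x (phi k) * ip (psi k) (\sum_(j < n) c j *: phi j) =
    \sum_(k < n) ip x (phi k) * (c k)^*.
  rewrite (big_ord_widen m (fun k => ip x (phi k) * (c k)^*) nm) [RHS]big_mkcond.
  by apply: eq_bigr => k _; rewrite ip_biorthogonal_lincomb; case: ifP; rewrite ?mulr0.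
rewrite (ip_sumr ip_inner); under [X in _ - X]eq_bigr do rewrite (ipZr ip_inner) mulrC.
by rewrite subrr Normc.normc0.
Qed.

End QuasiBasis.

Theorem proposition4p3 (R : realType) (V : lmodType R[i]) (ip : V -> V -> R[i])
  (phi psi : nat -> V) (D E : V -> Prop) (r : nat -> R) :
  hilbert_space ip ->
  biorthogonal ip phi psi ->
  subspace D -> subspace E -> dense ip D -> dense ip E ->
  quasi_basis ip phi psi D E ->
  (forall x, span_seq psi x -> D x) -> (forall x, D x -> Dom ip phi x) ->
  (forall x, span_seq phi x -> E x) -> (forall x, E x -> Dom ip psi x) ->
  (forall n, 1 <= r n) ->
  (forall x, Dom_r ip r phi x -> D x) ->
  dense ip (Dom_r ip r phi) ->
  dense ip (span_seq phi) /\ quasi_basis ip phi psi (Dom ip phi) (span_seq phi).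
Proof.
move=> [ip_inner ip_complete] bio _ _ _ E_dense qb _ _ _ _ _ Dom_r_D _.
split; last exact: (biorthogonal_quasi_basis_span ip_inner bio).
apply: (total_span_dense ip_inner ip_complete) => z z_orth.
apply: (orth_dense_eq0 ip_inner E_dense) => y Ey.
exact: (quasi_basis_orth qb (Dom_r_D z (Dom_r_orth r z_orth)) z_orth Ey).
Qed.
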